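(* For every $k\ge1$, the set $G_k$ is a subgroup of $B_k$.
   Context: Let $C_2=\{e,\sigma\}$ with $\sigma=(1,2)$. Define $B_1=C_2$ and $B_k=B_{k-1}\wr C_2$ for $k>1$, with elements written as wreath recursions $(g_1,g_2)\pi$, $g_1,g_2\in B_{k-1}$, $\pi\in C_2$, and multiplication $(g_1,g_2)\pi\cdot(h_1,h_2)\rho=(g_1h_{\pi(1)},g_2h_{\pi(2)})\pi\rho$. Define $G_1=\{e\}$ and, for $k>1$, $G_k=\{(g_1,g_2)\pi\in B_k : g_1g_2\in G_{k-1}\}$. *)

From mathcomp Require Import all_boot.
Set Implicit Arguments. Unset Strict Implicit. Unset Printing Implicit Defensive.

(* C_2 = {e, sigma} is represented by bool: false = e, true = sigma = (1,2).
   Bt n is the carrier of B_(n+1):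
   B_1 = C_2, B_(k) = B_(k-1) wr C_2 with elements (g1, g2) pi. *)
Fixpoint Bt (n : nat) : Type :=
  match n with
  | 0 => bool
  | n'.+1 => (Bt n' * Bt n' * bool)%type
  end.

Definition B (k : nat) : Type := Bt k.-1.

Fixpoint Bone (n : nat) : Bt n :=
  match n return Bt n with
  | 0 => false
  | n'.+1 => (Bone n', Bone n', false)
  end.

(* Multiplication: (g1,g2)pi * (h1,h2)rho = (g1 h_{pi(1)}, g2 h_{pi(2)}) pi rho.
   For pi = sigma, pi(1) = 2 and pi(2) = 1. Product in C_2 is xor. *)
Fixpoint Bmul (n : nat) : Bt n -> Bt n -> Bt n :=
  match n return Bt n -> Bt n -> Bt n with
  | 0 => fun p r => addb p r
  | n'.+1 => fun g h =>
      let: (g1, g2, p) := g in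
      let: (h1, h2, r) := h in
      if p then (Bmul g1 h2, Bmul g2 h1, addb p r)
           else (Bmul g1 h1, Bmul g2 h2, addb p r)
  end.

(* Inverse: ((g1,g2)pi)^-1 = (g_{pi^-1(1)}^-1, g_{pi^-1(2)}^-1) pi^-1 *)
Fixpoint Binv (n : nat) : Bt n -> Bt n :=
  match n return Bt n -> Bt n with
  | 0 => fun p => p
  | n'.+1 => fun g =>
      let: (g1, g2, p) := g in
      if p then (Binv g2, Binv g1, p) else (Binv g1, Binv g2, p)
  end.

(* Gt n is the subset G_(n+1) of B_(n+1):
   G_1 = {e};  G_k = {(g1,g2)pi in B_k | g1 g2 in G_(k-1)}. *)
Fixpoint Gt (n : nat) : Bt n -> Prop :=
  match n return Bt n -> Prop with
  | 0 => fun p => p = false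
  | n'.+1 => fun g => let: (g1, g2, _) := g in Gt (Bmul g1 g2)
  end.

Definition G (k : nat) : B k -> Prop := @Gt k.-1.

Definition is_subgroup (n : nat) (S : Bt n -> Prop) : Prop :=
  [/\ S (Bone n),
      (forall x y, S x -> S y -> S (Bmul x y)) &
      (forall x, S x -> S (Binv x))].

From mathcomp Require Import all_boot.

(* An element of B_k is a binary tree of depth k-1 of C_2-labels; let its
   leaf parity be the sum in C_2 of the labels at the leaves.  Multiplying
   two elements only permutes the subtrees of the second factor before
   multiplying labels leafwise, so the leaf parity is a homomorphism
   B_k -> C_2.  Unfolding the definition, g = (g1,g2)pi lies in G_k iff
   g1 g2 lies in G_(k-1), i.e. iff its leaf parity vanishes: G_k is the
   kernel of the leaf parity, hence a subgroup. *)

Fixpoint leaf_parity (n : nat) : Bt n -> bool :=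
  match n return Bt n -> bool with
  | 0 => fun p => p
  | n'.+1 => fun g =>
      let: (g1, g2, _) := g in leaf_parity n' g1 (+) leaf_parity n' g2
  end.

Arguments leaf_parity {n}.

Lemma leaf_parity_one n : leaf_parity (Bone n) = false.
Proof. by elim: n => [|n IHn] //=; rewrite IHn. Qed.

Lemma leaf_parityM n (x y : Bt n) :
  leaf_parity (Bmul x y) = leaf_parity x (+) leaf_parity y.
Proof.
elim: n x y => [|n IHn] // [[x1 x2] []] [[y1 y2] r] /=.
  by rewrite !IHn addbACA [leaf_parity y2 (+) _]addbC.
by rewrite !IHn addbACA.
Qed.

Lemma leaf_parityV n (x : Bt n) : leaf_parity (Binv x) = leaf_parity x.
Proof. by elim: n x => [|n IHn] // [[x1 x2] []] /=; rewrite !IHn // addbC. Qed.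

Lemma Gt_leaf_parity n (x : Bt n) : Gt x <-> leaf_parity x = false.
Proof.
by elim: n x => [|n IHn] // [[x1 x2] p] /=; rewrite -leaf_parityM; exact: IHn.
Qed.

Lemma kernel_is_subgroup {n} {f : Bt n -> bool} :
    f (Bone n) = false ->
    (forall x y, f (Bmul x y) = f x (+) f y) ->
    (forall x, f (Binv x) = f x) ->
  is_subgroup (fun x => f x = false).
Proof.
move=> f1 fM fV; split=> // [x y fx fy|x fx]; first by rewrite fM fx fy.
by rewrite fV.
Qed.

Lemma is_subgroup_equiv n (S T : Bt n -> Prop) :
  (forall x, S x <-> T x) -> is_subgroup S -> is_subgroup T.
Proof.
move=> ST [S1 SM SV]; split=> [|x y /ST Sx /ST Sy|x /ST Sx]; apply/ST; auto.
Qed.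

Theorem mainTheorem10 : forall k : nat, (1 <= k)%N -> @is_subgroup k.-1 (@G k).
Proof.
move=> k _; apply: is_subgroup_equiv (kernel_is_subgroup (leaf_parity_one _)
  (@leaf_parityM _) (@leaf_parityV _)) => x.
by split=> /Gt_leaf_parity.
Qed.
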